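(* Let $q\geq 2$ be an integer, $z\geq 2$, $\beta>0$, and let $\bar\nu\in\mathcal{P}(\{1,\dots,q\})$ be a global minimizer of $\Gamma_{\beta,q,z}(\nu)=-\frac{\beta}{z}\sum_{i=1}^q\nu_i^z+\sum_{i=1}^q\nu_i\log(q\nu_i)$ whose coordinates are ordered, $\bar\nu_1\geq\bar\nu_2\geq\dots\geq\bar\nu_q$. Define $g(x):=\beta x^{z-1}-\log(qx)$ for $x\in(0,1]$ and let $\tilde u:=(\beta(z-1))^{-1/(z-1)}$ be the minimizer of $g$. Then: (i) If $\bar\nu_1\leq\tilde u$, then $\bar\nu_k=\bar\nu_1$ for all $k\in\{2,\dots,q\}$, so $\bar\nu=(\frac1q,\dots,\frac1q)^T$. (ii) If $\bar\nu_1>\tilde u$, then $\bar\nu_k\in\{\bar\nu_0,\bar\nu_1\}$ for all $k\in\{2,\dots,q\}$, where $\bar\nu_0<\bar\nu_1$ satisfies $g(\bar\nu_0)=g(\bar\nu_1)$; in this case $$\bar\nu=(\underbrace{\bar\nu_1,\dots,\bar\nu_1}_{l\text{ times}},\bar\nu_0,\dots,\bar\nu_0)^T\quad\text{with }\bar\nu_1=\frac{1-(q-l)\bar\nu_0}{l},$$ for some $1\leq l\leq q$.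
   Context: $\mathcal{P}(\{1,\dots,q\})$ denotes the set of probability vectors on $\{1,\dots,q\}$. *)

From HB Require Import structures.
From mathcomp Require Import all_boot all_order all_algebra.
From mathcomp Require Import all_classical all_reals all_analysis.
Set Implicit Arguments. Unset Strict Implicit. Unset Printing Implicit Defensive.
Import Order.TTheory GRing.Theory Num.Theory.
Local Open Scope ring_scope.

(* nu : 'I_q -> R ; paper index i in {1..q} corresponds to ordinal i-1 *)
Definition is_prob (R : realType) (q : nat) (nu : 'I_q -> R) : Prop :=
  (forall i, 0 <= nu i) /\ \sum_(i < q) nu i = 1.

(* x log(q x), with the standard convention 0 log 0 = 0 *)
Definition xlogqx (R : realType) (q : nat) (x : R) : R :=
  if x == 0 then 0 else x * ln (q%:R * x).

Definition Gamma (R : realType) (beta : R) (q : nat) (z : R) (nu : 'I_q -> R) : R :=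
  - (beta / z) * \sum_(i < q) (nu i `^ z) + \sum_(i < q) xlogqx q (nu i).

Definition is_global_minimizer (R : realType) (beta : R) (q : nat) (z : R)
  (nu : 'I_q -> R) : Prop :=
  is_prob nu /\ forall mu : 'I_q -> R, is_prob mu -> Gamma beta z nu <= Gamma beta z mu.

Definition nonincreasing_coords (R : realType) (q : nat) (nu : 'I_q -> R) : Prop :=
  forall i j : 'I_q, (i <= j)%N -> nu j <= nu i.

Definition gfun (R : realType) (beta : R) (q : nat) (z : R) (x : R) : R :=
  beta * x `^ (z - 1) - ln (q%:R * x).

Definition u_tilde (R : realType) (beta z : R) : R :=
  (beta * (z - 1)) `^ (- (z - 1)^-1).

From HB Require Import structures.
From mathcomp Require Import all_boot all_order all_algebra.
From mathcomp Require Import all_classical all_reals all_analysis.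
From mathcomp Require Import lra.

Import Order.TTheory GRing.Theory Num.Theory.
Import numFieldNormedType.Exports.
Local Open Scope classical_set_scope.
Local Open Scope ring_scope.

Set Implicit Arguments.
Unset Strict Implicit.
Unset Printing Implicit Defensive.

(* A minimizer is stationary under transferring mass between two coordinates; as [x log x] has
   slope [-oo] at [0], all its coordinates are positive, and the first-order condition says that
   [g] takes the same value at every coordinate.  Now [g] decreases on [(0, ut]] and increases on
   [[ut, +oo)], so each of its level sets has at most one point on either side of [ut].  If the
   largest coordinate [nu_1] is at most [ut], all coordinates lie on the decreasing branch and are
   equal.  Otherwise the coordinates at least [ut] equal [nu_1] and the others equal the unique
   [nu_0 <= ut] with [g nu_0 = g nu_1]; the ordering gives the block shape, and the constraint
   [sum nu = 1] gives [nu_1]. *)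

Lemma bigD1_pair (V : zmodType) (I : finType) (F : I -> V) (i j : I) : i != j ->
  \sum_k F k = F i + F j + \sum_(k | (k != i) && (k != j)) F k.
Proof.
move=> ij; rewrite (bigD1 i) //= (bigD1 j) /=; last by rewrite eq_sym.
by rewrite addrA.
Qed.

Lemma is_prob_le1 (R : realType) (q : nat) (nu : 'I_q -> R) (i : 'I_q) :
  is_prob nu -> nu i <= 1.
Proof.
by case=> nu_ge0 <-; rewrite (bigD1 i) //= lerDl sumr_ge0.
Qed.

Lemma is_prob_exists_gt0 (R : realType) (q : nat) (nu : 'I_q -> R) :
  is_prob nu -> exists i, 0 < nu i.
Proof.
case=> nu_ge0 nu_sum; apply/existsP; apply: contraT => /existsPn nu_le0.
have : \sum_(k < q) nu k <= 0 by apply: sumr_le0 => k _; rewrite leNgt nu_le0.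
by rewrite nu_sum ler10.
Qed.

Lemma is_prob_const (R : realType) (q : nat) (nu : 'I_q -> R) (c : R) :
  (0 < q)%N -> is_prob nu -> (forall k, nu k = c) -> c = q%:R^-1.
Proof.
move=> q_gt0 [_ nu_sum] nu_c; move: nu_sum; under eq_bigr do rewrite nu_c.
rewrite sumr_const card_ord -[c *+ q]mulr_natr => /(congr1 (fun x => x / q%:R)) /=.
by rewrite mulfK ?mul1r // pnatr_eq0 -lt0n.
Qed.

Section TwoValuedBlocks.
Variables (R : realType) (q : nat) (nu : 'I_q -> R) (a b : R).
Hypotheses (nu_noninc : nonincreasing_coords nu) (ab : a < b)
  (nu_ab : forall k, nu k = a \/ nu k = b) (nu_b : exists k, nu k = b).

Lemma nonincreasing_two_valued_blocks : exists l : nat,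
  [/\ (1 <= l <= q)%N, (forall k : 'I_q, (k < l)%N -> nu k = b) &
      (forall k : 'I_q, (l <= k)%N -> nu k = a)].
Proof.
pose P n := [forall k : 'I_q, (n <= k)%N ==> (nu k == a)].
have Pq : P q by apply/forallP => k; rewrite leqNgt ltn_ord.
have [l Pl l_min] := ex_minnP (ex_intro P q Pq).
have ge_l (k : 'I_q) : (l <= k)%N -> nu k = a.
  by move=> lk; apply/eqP; move/forallP/(_ k): Pl; rewrite lk.
have lt_l (k : 'I_q) : (k < l)%N -> nu k = b.
  move=> kl; case: (nu_ab k) => // nka; suff: (l <= k)%N by rewrite leqNgt kl.
  apply: l_min; apply/forallP => j; apply/implyP => kj.
  case: (nu_ab j) => [-> //|njb].
  by have := nu_noninc kj; rewrite nka njb leNgt ab.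
exists l; split=> //; apply/andP; split; last exact: l_min.
rewrite lt0n; apply/eqP => l0; have [k nkb] := nu_b.
have : nu k = a by apply: ge_l; rewrite l0.
by rewrite nkb => ba; move: ab; rewrite ba ltxx.
Qed.

End TwoValuedBlocks.

Lemma sum_blocks (V : nmodType) (q l : nat) (F : 'I_q -> V) (a b : V) :
  (l <= q)%N -> (forall k : 'I_q, (k < l)%N -> F k = b) ->
  (forall k : 'I_q, (l <= k)%N -> F k = a) ->
  \sum_(k < q) F k = b *+ l + a *+ (q - l).
Proof.
move=> lq lt_l ge_l.
pose G n := if (n < l)%N then b else a.
have -> : \sum_(k < q) F k = \sum_(0 <= n < q) G n.
  rewrite big_mkord; apply: eq_bigr => k _; rewrite /G.
  by case: ifP => kl; [exact: lt_l | apply: ge_l; rewrite leqNgt kl].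
rewrite (@big_cat_nat _ _ _ l) //=.
rewrite (@eq_big_nat _ _ _ 0 l _ (fun=> b)); last by move=> n /andP [_ nl]; rewrite /G nl.
rewrite (@eq_big_nat _ _ _ l q _ (fun=> a)); last first.
  by move=> n /andP [ln _]; rewrite /G ltnNge ln.
by rewrite !big_const_nat !iter_addr !addr0 subn0.
Qed.

Section GammaMinimizers.
Variables (R : realType) (beta z : R) (q : nat).
Hypotheses (beta_gt0 : 0 < beta) (z_gt1 : 1 < z) (q_gt0 : (0 < q)%N).

Local Notation g := (gfun beta q z).
Local Notation ut := (u_tilde beta z).

Definition gfun_deriv (x : R) : R := beta * ((z - 1) * x `^ (z - 1 - 1)) - x^-1.

Lemma q_natr_gt0 : 0 < q%:R :> R. Proof. by rewrite ltr0n. Qed.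

Lemma gfunE (x : R) : 0 < x -> g x = beta * x `^ (z - 1) - (ln q%:R + ln x).
Proof. by move=> x0; rewrite /gfun lnM ?posrE ?q_natr_gt0. Qed.

Lemma is_derive_gfun (x : R) : 0 < x -> is_derive x 1 g (gfun_deriv x).
Proof.
move=> x0.
have dpow := is_deriveZ beta (is_derive1_powR (z - 1) x0).
have dln : is_derive x (1:R) (fun y : R => ln (q%:R * y)) ((q%:R * x)^-1 * q%:R).
  apply: is_derive1_comp; first by apply: is_derive1_ln; rewrite mulr_gt0 ?q_natr_gt0.
  change (is_derive x 1 (q%:R \*: (@id R)) q%:R).
  apply: (is_derive_eq (is_deriveZ q%:R (@is_derive_id _ R x 1))).
  by change (q%:R * 1 = q%:R :> R); rewrite mulr1.
have -> : g = (beta \*: (powR (R:=R))^~ (z - 1)) - (fun y : R => ln (q%:R * y)).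
  by apply/funext.
apply: (is_derive_eq (is_deriveB dpow dln)).
by rewrite /= /gfun_deriv invfM mulrAC mulVf ?gt_eqF ?q_natr_gt0 // mul1r.
Qed.

Lemma gfun_continuous (a b : R) : 0 < a -> {within `[a, b], continuous g}.
Proof.
move=> a0; apply: continuous_in_subspaceT => x.
rewrite inE /= in_itv /= => /andP [ax _].
apply: differentiable_continuous; apply/derivable1_diffP.
by case: (is_derive_gfun (lt_le_trans a0 ax)).
Qed.

Lemma u_tilde_gt0 : 0 < ut.
Proof. by rewrite /u_tilde powR_gt0 // mulr_gt0 // subr_gt0. Qed.

Lemma u_tilde_powR : ut `^ (z - 1) = (beta * (z - 1))^-1.
Proof.
have z1 : 0 < z - 1 by rewrite subr_gt0.
rewrite /u_tilde -powRrM mulNr mulVf ?gt_eqF //.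
by rewrite powR_inv1 // ltW // mulr_gt0.
Qed.

Lemma mul_gfun_deriv (x : R) : 0 < x ->
  x * gfun_deriv x = beta * (z - 1) * (x `^ (z - 1) - ut `^ (z - 1)).
Proof.
move=> x0; have z1 : 0 < z - 1 by rewrite subr_gt0.
rewrite u_tilde_powR [RHS]mulrBr mulfV ?gt_eqF ?mulr_gt0 //.
rewrite /gfun_deriv [LHS]mulrBr mulfV ?gt_eqF //; congr (_ - _).
rewrite [x * _]mulrC -!mulrA [x `^ _ * x]mulrC mulr_powRB1 ?ltW //.
Qed.

Lemma gfun_deriv_lt0 (x : R) : 0 < x -> x < ut -> gfun_deriv x < 0.
Proof.
move=> x0 xu; have z1 : 0 < z - 1 by rewrite subr_gt0.
rewrite -(pmulr_rlt0 _ x0) mul_gfun_deriv // pmulr_rlt0 ?mulr_gt0 // subr_lt0.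
by rewrite gt0_ltr_powR // nnegrE ltW // u_tilde_gt0.
Qed.

Lemma gfun_deriv_gt0 (x : R) : ut < x -> 0 < gfun_deriv x.
Proof.
move=> ux; have z1 : 0 < z - 1 by rewrite subr_gt0.
have x0 := lt_trans u_tilde_gt0 ux.
rewrite -(pmulr_rgt0 _ x0) mul_gfun_deriv // pmulr_rgt0 ?mulr_gt0 // subr_gt0.
by rewrite gt0_ltr_powR // nnegrE ltW // u_tilde_gt0.
Qed.

Lemma gfun_MVT (x y : R) : 0 < x -> x < y ->
  exists2 c, x < c < y & g y - g x = gfun_deriv c * (y - x).
Proof.
move=> x0 xy.
have dg (c : R) : c \in `]x, y[ -> is_derive c 1 g (gfun_deriv c).
  by rewrite in_itv /= => /andP [xc _]; apply: is_derive_gfun (lt_trans x0 xc).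
have [c cxy ->] := MVT xy dg (@gfun_continuous x y x0).
by exists c => //; rewrite in_itv in cxy.
Qed.

Lemma gfun_decreasing (x y : R) : 0 < x -> x < y -> y <= ut -> g y < g x.
Proof.
move=> x0 xy yu; have [c /andP [xc cy] gxy] := gfun_MVT x0 xy.
rewrite -subr_lt0 gxy pmulr_llt0 ?subr_gt0 // gfun_deriv_lt0 //.
  exact: lt_trans xc.
exact: lt_le_trans yu.
Qed.

Lemma gfun_increasing (x y : R) : ut <= x -> x < y -> g x < g y.
Proof.
move=> ux xy; have x0 := lt_le_trans u_tilde_gt0 ux.
have [c /andP [xc cy] gxy] := gfun_MVT x0 xy.
rewrite -subr_gt0 gxy pmulr_lgt0; last by rewrite subr_gt0.
by apply: gfun_deriv_gt0; exact: le_lt_trans xc.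
Qed.

Lemma gfun_inj_le_u_tilde (x y : R) : 0 < x -> 0 < y -> x <= ut -> y <= ut ->
  g x = g y -> x = y.
Proof.
move=> x0 y0 xu yu gxy; case: (ltgtP x y) => // [xy|yx].
  by have := gfun_decreasing x0 xy yu; rewrite gxy ltxx.
by have := gfun_decreasing y0 yx xu; rewrite gxy ltxx.
Qed.

Lemma gfun_inj_ge_u_tilde (x y : R) : ut <= x -> ut <= y -> g x = g y -> x = y.
Proof.
move=> ux uy gxy; case: (ltgtP x y) => // [xy|yx].
  by have := gfun_increasing ux xy; rewrite gxy ltxx.
by have := gfun_increasing uy yx; rewrite gxy ltxx.
Qed.

(* At [a := min ut (e^(-|g y|) / q)] we get [g a >= - ln (q a) >= |g y|], while [g ut < g y];
   the intermediate value theorem on [[a, ut]] then yields the preimage. *)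
Lemma gfun_left_preimage (y : R) : ut < y ->
  exists c, [/\ 0 < c, c <= ut & g c = g y].
Proof.
move=> uy; set M := `|g y|.
set a := Num.min ut (expR (- M) / q%:R).
have e0 : 0 < expR (- M) / q%:R by rewrite divr_gt0 ?expR_gt0 ?q_natr_gt0.
have a0 : 0 < a by rewrite lt_min u_tilde_gt0 e0.
have au : a <= ut by rewrite ge_min lexx.
have gya : g y <= g a.
  have ln_qa : ln (q%:R * a) <= - M.
    rewrite -[X in _ <= X]expRK ler_ln ?posrE ?mulr_gt0 ?q_natr_gt0 ?expR_gt0 //.
    by rewrite -ler_pdivlMl ?q_natr_gt0 // mulrC ge_min lexx orbT.
  have : 0 <= beta * a `^ (z - 1) by apply: mulr_ge0; [exact: ltW | exact: powR_ge0].
  have : g y <= M by rewrite ler_norm.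
  rewrite /gfun; lra.
have guy : g ut < g y by apply: gfun_increasing.
have gy_between : Num.min (g a) (g ut) <= g y <= Num.max (g a) (g ut).
  by rewrite ge_min le_max (ltW guy) gya orbT.
have [c cin gc] := IVT au (@gfun_continuous a ut a0) gy_between.
move: cin; rewrite in_itv /= => /andP [ac cu].
by exists c; split => //; exact: lt_le_trans ac.
Qed.

Definition gamma_term (x : R) : R := - (beta / z) * x `^ z + xlogqx q x.

(* Coincides with [gamma_term] on [(0, +oo)] but has no case split, so it can be differentiated there. *)
Definition gamma_term_ln (x : R) : R := - (beta / z) * x `^ z + x * (ln q%:R + ln x).

Lemma z_gt0 : 0 < z. Proof. exact: lt_trans z_gt1. Qed.

Lemma gamma_termE (x : R) : 0 < x -> gamma_term x = gamma_term_ln x.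
Proof. by move=> x0; rewrite /gamma_term /xlogqx gt_eqF // lnM ?posrE ?q_natr_gt0. Qed.

Lemma gamma_term0 : gamma_term 0 = 0.
Proof. by rewrite /gamma_term /xlogqx eqxx powR0 ?gt_eqF ?z_gt0 // mulr0 addr0. Qed.

Lemma Gamma_sum (nu : 'I_q -> R) : Gamma beta z nu = \sum_(k < q) gamma_term (nu k).
Proof. by rewrite /Gamma mulr_sumr -big_split. Qed.

Lemma is_derive_gamma_term_ln (x : R) : 0 < x -> is_derive x 1 gamma_term_ln (1 - g x).
Proof.
move=> x0.
have dpow := is_deriveZ (- (beta / z)) (is_derive1_powR z x0).
have dxlnx : is_derive x (1:R) (fun y : R => y * (ln q%:R + ln y)) (ln q%:R + ln x + 1).
  apply: is_derive_eq.
    apply: (@is_deriveM _ _ (fun y : R => y) (fun y => ln q%:R + ln y)).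
    by apply: is_deriveD; exact: is_derive1_ln.
  rewrite /= add0r; change (x * x^-1 + (ln q%:R + ln x) * 1 = ln q%:R + ln x + 1).
  by rewrite mulr1 mulfV ?gt_eqF // addrC.
have -> : gamma_term_ln =
    (- (beta / z) \*: (powR (R:=R))^~ z) + (fun y : R => y * (ln q%:R + ln y)).
  by apply/funext.
apply: (is_derive_eq (is_deriveD dpow dxlnx)).
rewrite gfunE // /GRing.scale /= mulrA mulNr divfK ?gt_eqF ?z_gt0 //.
lra.
Qed.

Lemma gamma_term_ln_continuous (a b : R) : 0 < a ->
  {within `[a, b], continuous gamma_term_ln}.
Proof.
move=> a0; apply: continuous_in_subspaceT => x.
rewrite inE /= in_itv /= => /andP [ax _].
apply: differentiable_continuous; apply/derivable1_diffP.
by case: (is_derive_gamma_term_ln (lt_le_trans a0 ax)).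
Qed.

Lemma gamma_term_ln_MVT (x y : R) : 0 < x -> x < y ->
  exists2 c, x < c < y & gamma_term_ln y - gamma_term_ln x = (1 - g c) * (y - x).
Proof.
move=> x0 xy.
have dF (c : R) : c \in `]x, y[ -> is_derive c 1 gamma_term_ln (1 - g c).
  by rewrite in_itv /= => /andP [xc _]; apply: is_derive_gamma_term_ln (lt_trans x0 xc).
have [c cxy ->] := MVT xy dF (@gamma_term_ln_continuous x y x0).
by exists c => //; rewrite in_itv in cxy.
Qed.

Lemma gamma_term_ln_le (x : R) : 0 < x -> gamma_term_ln x <= x * (ln q%:R + ln x).
Proof.
move=> x0; rewrite /gamma_term_ln gerDr mulNr oppr_le0.
by apply: mulr_ge0; [rewrite divr_ge0 // ltW // z_gt0 | exact: powR_ge0].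
Qed.

Lemma is_derive_transfer (a b t : R) : 0 < a + t -> 0 < b - t ->
  is_derive t 1 (fun s => gamma_term_ln (a + s) + gamma_term_ln (b - s))
    (g (b - t) - g (a + t)).
Proof.
move=> at0 bt0.
have da : is_derive t 1 (fun s : R => a + s) 1.
  apply: (is_derive_eq (is_deriveD (is_derive_cst a t 1) (is_derive_id t (1:R)))).
  by rewrite add0r.
have db : is_derive t 1 (fun s : R => b - s) (-1).
  apply: (is_derive_eq (is_deriveB (is_derive_cst b t 1) (is_derive_id t (1:R)))).
  by rewrite sub0r.
have dh : is_derive t 1 (fun s => gamma_term_ln (a + s) + gamma_term_ln (b - s))
    ((1 - g (a + t)) * 1 + (1 - g (b - t)) * -1).
  exact: (is_deriveD
    (@is_derive1_comp _ _ (fun s => a + s) _ _ _ (is_derive_gamma_term_ln at0) da)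
    (@is_derive1_comp _ _ (fun s => b - s) _ _ _ (is_derive_gamma_term_ln bt0) db)).
by apply: (is_derive_eq dh); rewrite mulr1 mulrN1; lra.
Qed.

Section Minimizer.
Variable nu : 'I_q -> R.
Hypothesis nu_min : is_global_minimizer beta z nu.

(* Moving mass [s] from coordinate [j] to coordinate [i] yields another probability vector. *)
Lemma minimizer_transfer (i j : 'I_q) (s : R) : i != j -> - nu i <= s -> s <= nu j ->
  gamma_term (nu i) + gamma_term (nu j) <= gamma_term (nu i + s) + gamma_term (nu j - s).
Proof.
move=> ij si sj; have [[nu_ge0 nu_sum] nu_le] := nu_min.
pose mu k := if k == i then nu i + s else if k == j then nu j - s else nu k.
have mui : mu i = nu i + s by rewrite /mu eqxx.
have muj : mu j = nu j - s by rewrite /mu eq_sym (negbTE ij) eqxx.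
have mu_other k : (k != i) && (k != j) -> mu k = nu k.
  by case/andP=> ki kj; rewrite /mu (negbTE ki) (negbTE kj).
have mu_prob : is_prob mu.
  split=> [k|].
    rewrite /mu; case: ifP => _; first by rewrite -(subrr (nu i)) lerD2l.
    by case: ifP => _ //; rewrite subr_ge0.
  rewrite (bigD1_pair _ ij) mui muj (eq_bigr _ mu_other) -nu_sum (bigD1_pair _ ij).
  by rewrite addrACA subrr addr0.
have := nu_le mu mu_prob.
rewrite !Gamma_sum (bigD1_pair _ ij) [X in _ <= X](bigD1_pair _ ij) mui muj.
rewrite [X in _ <= _ + X](eq_bigr (fun k => gamma_term (nu k))) ?lerD2r //.
by move=> k /mu_other ->.
Qed.

(* First-order condition: [t = 0] minimizes the transfer of mass [t] between two positive coordinates. *)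
Lemma minimizer_gfun_eq (i j : 'I_q) : i != j -> 0 < nu i -> 0 < nu j ->
  g (nu i) = g (nu j).
Proof.
move=> ij nui_gt0 nuj_gt0.
pose h t := gamma_term_ln (nu i + t) + gamma_term_ln (nu j - t).
have in_dom t : t \in `]- nu i, nu j[ -> 0 < nu i + t /\ 0 < nu j - t.
  by rewrite in_itv /= => /andP [ta tb]; split; lra.
have h_min t : t \in `]- nu i, nu j[ -> h 0 <= h t.
  move=> /in_dom [at0 bt0]; rewrite /h addr0 subr0 -!gamma_termE //.
  by apply: minimizer_transfer => //; apply: ltW; lra.
have h_derivable t : t \in `]- nu i, nu j[ -> derivable h t 1.
  by move=> /in_dom [at0 bt0]; case: (is_derive_transfer at0 bt0).
have ab : - nu i <= nu j by lra.
have zero_in : (0:R) \in `]- nu i, nu j[ by rewrite in_itv /= oppr_lt0 nui_gt0 nuj_gt0.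
have dh0 := @derive_val _ _ _ _ _ _ _ (derive1_at_min ab h_derivable zero_in h_min).
have [ai0 bj0] := in_dom 0 zero_in.
have dh := @derive_val _ _ _ _ _ _ _ (is_derive_transfer ai0 bj0).
by apply/eqP; rewrite eq_sym -subr_eq0 -[nu j]subr0 -[nu i]addr0 -dh dh0.
Qed.

(* Since [x log x] has slope [-oo] at [0], moving a small mass [t] onto an empty coordinate
   strictly decreases [Gamma]; [t = nu_i e^(-beta) / 2] is small enough. *)
Lemma minimizer_coord_gt0 (j : 'I_q) : 0 < nu j.
Proof.
have [nu_prob _] := nu_min.
rewrite lt_def nu_prob.1 andbT; apply/eqP => nuj0.
have [i nui_gt0] := is_prob_exists_gt0 nu_prob.
have a1 : nu i <= 1 := is_prob_le1 i nu_prob.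
have ij : j != i by apply/eqP=> ji; move: nui_gt0; rewrite -ji nuj0 ltxx.
set t := nu i / 2 * expR (- beta).
have t0 : 0 < t by rewrite mulr_gt0 ?divr_gt0 ?expR_gt0.
have ta : t <= nu i / 2.
  rewrite /t -[X in _ <= X]mulr1; apply: ler_wpM2l; first by rewrite divr_ge0 ?ltW.
  by rewrite expR_le1 oppr_le0 ltW.
have at0 : 0 < nu i - t by lra.
have := @minimizer_transfer j i t ij (ltac:(by rewrite nuj0 oppr0 ltW)) (ltac:(lra)).
rewrite nuj0 add0r gamma_term0 add0r (gamma_termE nui_gt0) (gamma_termE at0) (gamma_termE t0).
have [c /andP [c1 c2] secant] := gamma_term_ln_MVT at0 (ltac:(lra) : nu i - t < nu i).
rewrite (_ : nu i - (nu i - t) = t) in secant; last by lra.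
have Ft := gamma_term_ln_le t0.
move=> transfer; have : (1 - g c) * t <= (ln q%:R + ln t) * t by lra.
have c0 : 0 < c := lt_trans at0 c1.
rewrite ler_pM2r // gfunE //.
have bc : beta * c `^ (z - 1) <= beta.
  rewrite -[X in _ <= X]mulr1; apply: ler_wpM2l; first exact: ltW.
  have : c `^ (z - 1) <= 1 `^ (z - 1).
    by apply: ge0_ler_powR; rewrite ?nnegrE ?ltW ?subr_gt0 //; lra.
  by rewrite powR1.
have ln_c : ln (nu i / 2) <= ln c by rewrite ler_ln ?posrE ?divr_gt0 //; lra.
have ln_t : ln t = ln (nu i / 2) - beta by rewrite /t lnM ?posrE ?divr_gt0 ?expR_gt0 // expRK.
lra.
Qed.

Lemma minimizer_gfun_const (i j : 'I_q) : g (nu i) = g (nu j).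
Proof.
have [-> // | ij] := eqVneq i j.
exact: minimizer_gfun_eq ij (minimizer_coord_gt0 i) (minimizer_coord_gt0 j).
Qed.

Variable m : 'I_q.
Hypothesis nu_le_m : forall k, nu k <= nu m.

Lemma minimizer_uniform : nu m <= ut -> forall k, nu k = nu m.
Proof.
move=> num_le k; apply: gfun_inj_le_u_tilde; rewrite ?minimizer_coord_gt0 //.
  exact: le_trans num_le.
exact: minimizer_gfun_const.
Qed.

Lemma minimizer_two_values : ut < nu m ->
  exists c, [/\ 0 < c, c < nu m, g c = g (nu m) & forall k, nu k = c \/ nu k = nu m].
Proof.
move=> num_gt; have [c [c0 cu gc]] := gfun_left_preimage num_gt.
exists c; split=> //; first exact: le_lt_trans num_gt.
move=> k; have [uk | ku] := leP ut (nu k).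
  by right; apply: gfun_inj_ge_u_tilde (ltW num_gt) _ => //; apply: minimizer_gfun_const.
left; apply: gfun_inj_le_u_tilde; rewrite ?minimizer_coord_gt0 ?(ltW ku) //.
by rewrite gc; apply: minimizer_gfun_const.
Qed.

End Minimizer.

End GammaMinimizers.

Theorem lemma5p3 (R : realType) (q : nat) (hq : (2 <= q)%N) (z beta : R)
  (hz : 2 <= z) (hbeta : 0 < beta) (nu : 'I_q -> R) :
  is_global_minimizer beta z nu ->
  nonincreasing_coords nu ->
  let nu1 := nu (Ordinal (ltnW hq)) in
  (nu1 <= u_tilde beta z ->
     forall k : 'I_q, nu k = nu1 /\ nu k = (q%:R)^-1) /\
  (u_tilde beta z < nu1 ->
     exists nu0 : R,
       [/\ 0 < nu0, nu0 < nu1, gfun beta q z nu0 = gfun beta q z nu1,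
           (forall k : 'I_q, nu k = nu0 \/ nu k = nu1) &
           exists l : nat,
             [/\ (1 <= l <= q)%N,
                 (forall k : 'I_q, (k < l)%N -> nu k = nu1),
                 (forall k : 'I_q, (l <= k)%N -> nu k = nu0) &
                 nu1 = (1 - (q - l)%:R * nu0) / l%:R]]).
Proof.
move=> nu_min nu_noninc nu1.
have z_gt1 : 1 < z by lra.
have q_gt0 : (0 < q)%N := ltnW hq.
have nu_le1 k : nu k <= nu1 by apply: nu_noninc.
split=> [nu1_le k | nu1_gt].
  have uniform := minimizer_uniform hbeta z_gt1 q_gt0 nu_min nu_le1 nu1_le.
  by split; [exact: uniform | rewrite uniform; exact: is_prob_const q_gt0 nu_min.1 uniform].
have [nu0 [nu0_gt0 nu0_lt gnu0 two_valued]] :=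
  minimizer_two_values hbeta z_gt1 q_gt0 nu_min nu1_gt.
have [l [l_range lt_l ge_l]] :=
  nonincreasing_two_valued_blocks nu_noninc nu0_lt two_valued (ex_intro _ _ erefl).
exists nu0; split=> //; exists l; split=> //.
have l_gt0 : (0 < l)%N by case/andP: l_range.
have := sum_blocks (proj2 (andP l_range)) lt_l ge_l; rewrite nu_min.1.2 => sum1.
have -> : 1 - (q - l)%:R * nu0 = nu1 * l%:R.
  by rewrite [X in X - _]sum1 mulr_natr mulr_natl addrK.
by rewrite mulfK // pnatr_eq0 -lt0n.
Qed.
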